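(* Suppose $\hat{e}(X_i) \in (0, 1)$ for all $i$, let $\hat{\gamma}$ minimize $\mathcal{L}_n(\gamma) := \mathbb{P}_n \rho_{\tau}(Y - \gamma^{\top} g(X)) Z \tfrac{1 - \hat{e}(X)}{\hat{e}(X)}$ and let $\hat{V}_i = \textup{sign}(Y_i - \hat{\gamma}^{\top} g(X_i))$. Then the optimal objective value of the optimization problem \begin{align*} \max_{\bar{e} \in \mathcal{E}_n(\Lambda)} \frac{\mathbb{P}_n YZ/\bar{e}}{\mathbb{P}_n Z/\hat{e}(X)} \quad \text{subject to} \quad \mathbb{P}_n g(X) Z / \bar{e} = \mathbb{P}_n g(X) Z / \hat{e}(X) \end{align*} is: \begin{align*} \frac{\mathbb{P}_n(Y - \hat{\gamma}^{\top} g(X)) Z(1 + \Lambda^{\hat{V}}(1-\hat{e}(X))/\hat{e}(X)) + \mathbb{P}_n \hat{\gamma}^{\top} g(X) Z / \hat{e}(X)}{\mathbb{P}_n Z / \hat{e}(X)}. \end{align*}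
   Context: We observe i.i.d. samples $(X_i, Y_i, Z_i)$, $i = 1, \dots, n$, with covariates $X_i \in \mathcal{X} \subseteq \mathbb{R}^d$, binary treatment $Z_i \in \{0,1\}$ and real outcome $Y_i$. $\hat{e}(x)$ is an estimate of the nominal propensity score $e(x) = P(Z=1 \mid X=x)$. $\Lambda \geq 1$ is fixed and $\tau = \Lambda/(\Lambda+1)$. $\mathbb{P}_n[\cdot]$ denotes the average $\tfrac{1}{n}\sum_{i=1}^n[\cdot]_i$ (for a vector $v$, $\mathbb{P}_n v = \tfrac1n\sum_i v_i$). The constraint set is $\mathcal{E}_n(\Lambda) = \{ \bar{e} \in \mathbb{R}^n : \Lambda^{-1} \leq \frac{\bar{e}_i/(1-\bar{e}_i)}{\hat{e}(X_i)/(1-\hat{e}(X_i))} \leq \Lambda \text{ for all } i \}$. $g : \mathcal{X} \to \mathbb{R}^k$ is a function containing an ``intercept'' (constant component), e.g. $g(x) = (1, \hat{Q}_\tau(x,1))$ with $\hat{Q}_\tau$ an estimated conditional quantile of $Y$. $\rho_{\tau}(u) = u(\tau - \mathbb{I}\{u < 0\})$ is the quantile regression check function. *)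

From HB Require Import structures.
From mathcomp Require Import all_boot all_order all_algebra.
From mathcomp Require Import reals.
Set Implicit Arguments. Unset Strict Implicit. Unset Printing Implicit Defensive.
Import Order.TTheory GRing.Theory Num.Theory.
Local Open Scope ring_scope.

Section Defs.
Variable R : realType.

Definition Pn (n : nat) (f : 'I_n -> R) : R := (\sum_(i < n) f i) / n%:R.

Definition rho (tau u : R) : R := u * (tau - ((u < 0)%R : bool)%:R).

Definition odds (e : R) : R := e / (1 - e).

Definition dotk (k : nat) (gam v : 'rV[R]_k) : R := \sum_(j < k) gam 0 j * v 0 j.

Definition En (n : nat) (Lam : R) (eh : 'I_n -> R) (ebar : 'I_n -> R) : Prop :=
  forall i, Lam^-1 <= odds (ebar i) / odds (eh i) <= Lam.
End Defs.

From HB Require Import structures.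
From mathcomp Require Import all_boot all_order all_algebra.
From mathcomp Require Import reals classical_sets.
From mathcomp Require Import ring lra.
Set Implicit Arguments. Unset Strict Implicit. Unset Printing Implicit Defensive.
Import Order.TTheory GRing.Theory Num.Theory.
Local Open Scope ring_scope.

(* Write Y = u + ghat^T g(X), u being the residual of the weighted quantile regression.
   The balancing constraints fix the ghat^T g(X) part of the objective.  Every admissible
   ebar has 1/ebar_i = 1 + w_i (1 - ehat_i)/ehat_i with w_i in [Lam^-1, Lam], hence
   u_i Z_i / ebar_i <= u_i Z_i (1 + Lam^(sign u_i) (1 - ehat_i)/ehat_i), the upper bound.
   For attainment, optimality of ghat for the check loss yields subgradients
   s_i of rho_tau at u_i with sum_i s_i Z_i (1 - ehat_i)/ehat_i g(X_i) = 0; the weights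
   w_i = 1 + (Lam - Lam^-1) s_i lie in [Lam^-1, Lam], equal Lam^(sign u_i) when u_i <> 0,
   and preserve the balancing constraints.  The subgradients are obtained from the
   nonnegative one-sided directional derivatives of the loss by a Farkas-type argument:
   a vector lies in the image of a box under a linear map as soon as the support
   function of that image dominates it. *)

Section InnerProduct.
Variables (R : realType) (k : nat).
Implicit Types (c d e : 'rV[R]_k) (a : R).

Lemma dotkDl c d e : dotk (c + d) e = dotk c e + dotk d e.
Proof. by rewrite /dotk -big_split; apply: eq_bigr => j _; rewrite mxE mulrDl. Qed.

Lemma dotkZl a c e : dotk (a *: c) e = a * dotk c e.
Proof. by rewrite /dotk mulr_sumr; apply: eq_bigr => j _; rewrite mxE mulrA. Qed.

Lemma dotkNl c e : dotk (- c) e = - dotk c e.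
Proof. by rewrite -scaleN1r dotkZl mulN1r. Qed.

Lemma dotkDr c d e : dotk c (d + e) = dotk c d + dotk c e.
Proof. by rewrite /dotk -big_split; apply: eq_bigr => j _; rewrite mxE mulrDr. Qed.

Lemma dotkZr a c e : dotk c (a *: e) = a * dotk c e.
Proof. by rewrite /dotk mulr_sumr; apply: eq_bigr => j _; rewrite mxE mulrCA. Qed.

Lemma dotkNr c e : dotk c (- e) = - dotk c e.
Proof. by rewrite -scaleN1r dotkZr mulN1r. Qed.

Lemma dotk0r c : dotk c 0 = 0.
Proof. by rewrite /dotk big1 // => j _; rewrite mxE mulr0. Qed.

Lemma dotkk_le0 c : dotk c c <= 0 -> c = 0.
Proof.
move=> cc_le0; have sq_ge0 j : 0 <= c 0 j * c 0 j by exact: sqr_ge0.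
have cc0 : dotk c c = 0 by apply/eqP; rewrite eq_le cc_le0 sumr_ge0.
apply/matrixP => i j; rewrite mxE (ord1 i).
have /eqP := psumr_eq0P (fun j _ => sq_ge0 j) cc0 (i := j) isT.
by rewrite mulf_eq0 orbb => /eqP.
Qed.

Lemma superlinear_le_max_linear (f : 'rV[R]_k -> R) (w : 'rV[R]_k) (lo hi : R) :
  lo <= hi ->
  (forall c d (a b : R), 0 <= a -> 0 <= b -> a * f c + b * f d <= f (a *: c + b *: d)) ->
  (forall d, f d <= Num.max (lo * dotk d w) (hi * dotk d w)) ->
  exists2 sg, lo <= sg <= hi & forall d, f d <= sg * dotk d w.
Proof.
move=> lo_hi f_super f_le.
have f_neg d : dotk d w < 0 -> f d <= lo * dotk d w.
  by move=> dw_lt0; have := f_le d; rewrite max_l // ler_nM2r.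
have f_pos d : 0 < dotk d w -> f d <= hi * dotk d w.
  by move=> dw_gt0; have := f_le d; rewrite max_r // ler_pM2r.
(* superlinearity puts every slope f c / c.w with c.w > 0 below every slope with c.w < 0;
   sg is the supremum of the former *)
have slopes c d : 0 < dotk c w -> dotk d w < 0 -> f c / dotk c w <= f d / dotk d w.
  move=> cw_gt0 dw_lt0.
  have := f_super c d (- dotk d w) (dotk c w).
  rewrite oppr_ge0 (ltW dw_lt0) (ltW cw_gt0) => /(_ isT isT).
  have := f_le (- dotk d w *: c + dotk c w *: d).
  rewrite dotkDl !dotkZl mulNr [dotk d w * _]mulrC addNr !mulr0 maxxx => f0 fcd.
  rewrite ler_ndivlMr // mulrAC ler_pdivlMr //; lra.
pose E := [set y | y = lo \/ exists2 c, 0 < dotk c w & y = f c / dotk c w]%classic.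
have E_le_hi y : E y -> y <= hi.
  by case=> [->|[c cw_gt0 ->]] //; rewrite ler_pdivrMr ?f_pos.
have E_sup : has_sup E by split; [exists lo; left | exists hi => y /E_le_hi].
have lo_le : lo <= sup E by apply: sup_upper_bound => //; left.
exists (sup E); first by rewrite lo_le; apply: ge_sup => //; exists lo; left.
move=> d; have [dw_lt0|dw_gt0|dw0] := ltgtP (dotk d w) 0.
- rewrite -ler_ndivlMr //; apply: ge_sup; first by exists lo; left.
  by move=> y [->|[c cw_gt0 ->]]; [rewrite ler_ndivlMr ?f_neg | exact: slopes].
- by rewrite -ler_pdivrMr //; apply: sup_upper_bound => //; right; exists d.
- by have := f_le d; rewrite dw0 !mulr0 maxxx.
Qed.

End InnerProduct.

Section BoxImage.
Variables (R : realType) (k : nat) (I : finType).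
Variables (v : I -> 'rV[R]_k) (a b : I -> R).
Hypothesis le_ab : forall i, a i <= b i.

Definition box_support (S : {set I}) (d : 'rV[R]_k) : R :=
  \sum_(i in S) Num.max (a i * dotk d (v i)) (b i * dotk d (v i)).

Lemma box_support_sublinear S c d (al be : R) : 0 <= al -> 0 <= be ->
  box_support S (al *: c + be *: d) <= al * box_support S c + be * box_support S d.
Proof.
move=> al_ge0 be_ge0; rewrite /box_support !mulr_sumr -big_split /=.
apply: ler_sum => i _; rewrite dotkDl !dotkZl.
have le_max_l (p q : R) : p <= Num.max p q by rewrite le_max lexx.
have le_max_r (p q : R) : q <= Num.max p q by rewrite le_max lexx orbT.
rewrite ge_max !mulrDr ![_ * (al * _)]mulrCA ![_ * (be * _)]mulrCA.
by rewrite !lerD ?ler_wpM2l.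
Qed.

Lemma box_image_of_support_le S c :
  (forall d, dotk d c <= box_support S d) ->
  exists s : I -> R, (forall i, a i <= s i <= b i) /\ c = \sum_(i in S) s i *: v i.
Proof.
have [N] := ubnP #|S|; elim: N S c => // N IH S c /ltnSE leSN c_le.
have [S0|[x xS]] := set_0Vmem S.
  exists a; split=> [i|]; first by rewrite lexx le_ab.
  rewrite S0 big_set0; apply: dotkk_le0.
  by have := c_le c; rewrite /box_support S0 big_set0.
(* peel off the generator [v x]: its coefficient comes from the one-dimensional case *)
pose f d := dotk d c - box_support (S :\ x) d.
have f_super c1 c2 (al be : R) : 0 <= al -> 0 <= be ->
    al * f c1 + be * f c2 <= f (al *: c1 + be *: c2).
  move=> al_ge0 be_ge0; have := box_support_sublinear (S :\ x) c1 c2 al_ge0 be_ge0.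
  rewrite /f dotkDl !dotkZl; lra.
have f_le d : f d <= Num.max (a x * dotk d (v x)) (b x * dotk d (v x)).
  by have := c_le d; rewrite /f /box_support (big_setD1 x xS) /=; lra.
have [sg /andP[a_sg sg_b] f_sg] := superlinear_le_max_linear (le_ab x) f_super f_le.
have card_lt : (#|S :\ x| < N)%N by move: leSN; rewrite (cardsD1 x S) xS.
have c'_le d : dotk d (c - sg *: v x) <= box_support (S :\ x) d.
  by have := f_sg d; rewrite dotkDr dotkNr dotkZr /f; lra.
have [s [s_ab cE]] := IH _ _ card_lt c'_le.
exists (fun i => if i == x then sg else s i); split.
  by move=> i; case: eqP => // ->; rewrite a_sg sg_b.
rewrite (big_setD1 x xS) /= eqxx (eq_bigr (fun i => s i *: v i)) -?cE.
  by rewrite addrC subrK.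
by move=> i /setD1P[/negPf->].
Qed.

End BoxImage.

Section EmpiricalMean.
Variables (R : realType) (n : nat).
Implicit Types f h : 'I_n -> R.

Lemma eq_Pn f h : f =1 h -> Pn f = Pn h.
Proof. by move=> fh; rewrite /Pn (eq_bigr _ (fun i _ => fh i)). Qed.

Lemma PnD f h : Pn (fun i => f i + h i) = Pn f + Pn h.
Proof. by rewrite /Pn big_split mulrDl. Qed.

Lemma PnZ (a : R) f : Pn (fun i => a * f i) = a * Pn f.
Proof. by rewrite /Pn -mulr_sumr mulrA. Qed.

Lemma ler_Pn f h : (forall i, f i <= h i) -> Pn f <= Pn h.
Proof. by move=> fh; rewrite /Pn ler_wpM2r ?invr_ge0 // ler_sum. Qed.

Lemma Pn_ge0 f : (forall i, 0 <= f i) -> 0 <= Pn f.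
Proof. by move=> f_ge0; rewrite /Pn divr_ge0 // sumr_ge0. Qed.

(* no [0 < n] needed: for [n = 0] the sum is empty and [Pn f = 0 / 0 = 0] *)
Lemma Pn_ge0E f : (0 <= Pn f) = (0 <= \sum_i f i).
Proof.
rewrite /Pn; have [n0|n_gt0] := posnP n; last by rewrite pmulr_lge0 ?invr_gt0 ?ltr0n.
by rewrite big1 ?mul0r // => i; have := ltn_ord i; rewrite {2}n0.
Qed.

Lemma Pn_dotk k (c : 'rV[R]_k) (G : 'I_n -> 'rV[R]_k) f :
  Pn (fun i => dotk c (G i) * f i) = \sum_j c 0 j * Pn (fun i => G i 0 j * f i).
Proof.
under eq_bigr do rewrite -PnZ.
rewrite /Pn -mulr_suml exchange_big; congr (_ / _); apply: eq_bigr => i _.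
by rewrite /dotk mulr_suml; apply: eq_bigr => j _; rewrite mulrA.
Qed.

End EmpiricalMean.

Section CheckLoss.
Variable R : realType.
Implicit Types tau u x : R.

Definition rho_lderiv tau u : R := if 0 < u then tau else tau - 1.
Definition rho_rderiv tau u : R := if u < 0 then tau - 1 else tau.

Lemma rho_lderiv_le_rderiv tau u : rho_lderiv tau u <= rho_rderiv tau u.
Proof. by rewrite /rho_lderiv /rho_rderiv; case: ltgtP => //= *; lra. Qed.

Lemma rho_subgradient_range tau u s :
  rho_lderiv tau u <= s <= rho_rderiv tau u -> tau - 1 <= s <= tau.
Proof.
rewrite /rho_lderiv /rho_rderiv => /andP[lo_s s_hi]; apply/andP; split.
  by move: lo_s; case: ifP => _; lra.
by move: s_hi; case: ifP => _; lra.
Qed.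

Lemma rho_addr tau u x : (u == 0) || (`|x| < `|u|) ->
  rho tau (u + x) = rho tau u + Num.max (rho_lderiv tau u * x) (rho_rderiv tau u * x).
Proof.
have [u_lt0|u_gt0|->] := ltgtP u 0.
- have -> : rho_lderiv tau u = tau - 1 by rewrite /rho_lderiv lt_gtF.
  have -> : rho_rderiv tau u = tau - 1 by rewrite /rho_rderiv u_lt0.
  rewrite maxxx (ltr0_norm u_lt0) => x_lt; have x_le := ler_norm x.
  by rewrite /rho (_ : u + x < 0) ?u_lt0 /=; [ring | lra].
- have -> : rho_lderiv tau u = tau by rewrite /rho_lderiv u_gt0.
  have -> : rho_rderiv tau u = tau by rewrite /rho_rderiv lt_gtF.
  rewrite maxxx (gtr0_norm u_gt0) => x_lt.
  have := ler_norm (- x); rewrite normrN => x_le.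
  rewrite /rho (_ : u + x < 0 = false) ?(lt_gtF u_gt0) /=; first by ring.
  by apply/negbTE; rewrite -leNgt; lra.
- have -> : rho_lderiv tau 0 = tau - 1 by rewrite /rho_lderiv ltxx.
  have -> : rho_rderiv tau 0 = tau by rewrite /rho_rderiv ltxx.
  move=> _; rewrite add0r /rho ltxx /= mul0r add0r.
  have [x_lt0|x_ge0] := ltP x 0; first by rewrite max_l /=; [ring | nra].
  by rewrite max_r /=; [ring | nra].
Qed.

Lemma exists_small_step n (u x : 'I_n -> R) :
  exists2 t : R, 0 < t & forall i, (u i == 0) || (`|t * x i| < `|u i|).
Proof.
pose K := 1 + \sum_i `|x i| / `|u i|.
have K_gt0 : 0 < K by rewrite ltr_pwDl // sumr_ge0 // => i _; rewrite divr_ge0.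
exists K^-1; first by rewrite invr_gt0.
move=> i; have [//|ui_neq0] := eqVneq (u i) 0; rewrite /=.
have rest_ge0 : 0 <= \sum_(j | j != i) `|x j| / `|u j|.
  by rewrite sumr_ge0 // => j _; rewrite divr_ge0.
have : `|x i| / `|u i| < K by rewrite /K (bigD1 i) //=; lra.
rewrite ltr_pdivrMr ?normr_gt0 // normrM gtr0_norm ?invr_gt0 // => xK.
by rewrite mulrC ltr_pdivrMr // mulrC.
Qed.

Lemma check_loss_first_order n k tau (Y w : 'I_n -> R) (G : 'I_n -> 'rV[R]_k)
    (ghat : 'rV[R]_k) :
  (forall i, 0 <= w i) ->
  (forall gam, Pn (fun i => rho tau (Y i - dotk ghat (G i)) * w i)
               <= Pn (fun i => rho tau (Y i - dotk gam (G i)) * w i)) ->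
  exists s : 'I_n -> R,
    (forall i, rho_lderiv tau (Y i - dotk ghat (G i)) <= s i
               <= rho_rderiv tau (Y i - dotk ghat (G i)))
    /\ \sum_i (s i * w i) *: G i = 0.
Proof.
move=> w_ge0 ghat_min; pose u i := Y i - dotk ghat (G i).
pose a i := rho_lderiv tau (u i); pose b i := rho_rderiv tau (u i).
pose v i := w i *: G i.
have le_ab i : a i <= b i by exact: rho_lderiv_le_rderiv.
(* the one-sided directional derivative of the loss at ghat is nonnegative *)
have support_ge0 d : dotk d 0 <= box_support v a b [set: 'I_n] d.
  have [t t_gt0 t_small] := exists_small_step u (fun i => dotk d (G i)).
  have loss_step i : rho tau (Y i - dotk (ghat - t *: d) (G i)) * w i
      = rho tau (u i) * w i + t * Num.max (a i * dotk d (v i)) (b i * dotk d (v i)).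
    have -> : Y i - dotk (ghat - t *: d) (G i) = u i + t * dotk d (G i).
      by rewrite dotkDl dotkNl dotkZl /u; ring.
    rewrite rho_addr ?t_small // dotkZr mulrDl.
    rewrite ![_ * (t * _)]mulrCA ![_ * (w i * _)]mulrCA -!maxr_pMr ?(ltW t_gt0) //.
    ring.
  have := ghat_min (ghat - t *: d).
  rewrite (eq_Pn loss_step) PnD PnZ -[X in X <= _]addr0 lerD2l pmulr_rge0 // Pn_ge0E.
  by rewrite dotk0r /box_support => sum_ge0; under eq_bigl do rewrite inE.
have [s [s_ab sum0]] := box_image_of_support_le le_ab support_ge0.
exists s; split=> //; rewrite [RHS]sum0; under [RHS]eq_bigl do rewrite inE.
by apply: eq_bigr => i _; rewrite scalerA.
Qed.

End CheckLoss.

Section Odds.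
Variable R : realType.
Implicit Types e eh w Lam u s : R.

Definition odds_tilt w eh : R := (1 + w * ((1 - eh) / eh))^-1.

Lemma inv_odds_ratio e eh : 0 < eh < 1 -> 0 < odds e / odds eh ->
  e^-1 = 1 + (odds e / odds eh)^-1 * ((1 - eh) / eh).
Proof.
case/andP=> eh_gt0 eh_lt1 q_gt0.
have e_neq0 : e != 0 by apply: contraTneq q_gt0 => ->; rewrite /odds !mul0r ltxx.
have e_neq1 : 1 - e != 0.
  by apply: contraTneq q_gt0; rewrite /odds => ->; rewrite invr0 mulr0 mul0r ltxx.
rewrite /odds; field.
by rewrite e_neq0 e_neq1 !gt_eqF // subr_gt0.
Qed.

Lemma odds_ratio_tilt eh w : 0 < eh < 1 -> 0 < w ->
  odds (odds_tilt w eh) / odds eh = w^-1.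
Proof.
case/andP=> eh_gt0 eh_lt1 w_gt0; rewrite /odds /odds_tilt; field.
have eh1_gt0 : 0 < 1 - eh by rewrite subr_gt0.
have r_gt0 : 0 < w * (1 - eh) by rewrite mulr_gt0.
have D_gt0 : 0 < w * (1 - eh) + eh by rewrite addr_gt0.
by rewrite (addrC eh) addrK !gt_eqF.
Qed.

Lemma mulr_le_sgz Lam w u : Lam^-1 <= w <= Lam -> u * w <= u * Lam ^ sgz u.
Proof.
case/andP=> Lw wL; have [u_lt0|u_gt0|->] := ltgtP u 0; last by rewrite !mul0r.
- by rewrite ltr0_sgz // exprN1 ler_nM2l.
- by rewrite gtr0_sgz // expr1z ler_pM2l.
Qed.

Lemma invr_sym_range Lam w : 0 < Lam -> Lam^-1 <= w <= Lam -> Lam^-1 <= w^-1 <= Lam.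
Proof.
move=> Lam_gt0 /andP[Lw wL]; have w_gt0 : 0 < w by apply: lt_le_trans Lw; rewrite invr_gt0.
apply/andP; split; first by rewrite lef_pV2 ?posrE.
by rewrite -(invrK Lam) lef_pV2 ?posrE ?invr_gt0.
Qed.

(* The affine map sending [[tau - 1, tau]], the range of the subgradients of [rho tau],
   onto [[Lam^-1, Lam]], where [tau = Lam / (Lam + 1)]. *)
Definition tilt_weight Lam s : R := 1 + (Lam - Lam^-1) * s.

Section TiltWeight.
Variable Lam : R.
Hypothesis Lam_ge1 : 1 <= Lam.
Local Notation tau := (Lam / (Lam + 1)).

Let slope_ge0 : 0 <= Lam - Lam^-1.
Proof. by rewrite subr_ge0 (le_trans _ Lam_ge1) // invf_le1 // (lt_le_trans _ Lam_ge1). Qed.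

Let tilt_weight_tau : tilt_weight Lam tau = Lam.
Proof.
have Lam_gt0 : 0 < Lam by apply: lt_le_trans Lam_ge1.
rewrite /tilt_weight; field; rewrite gt_eqF ?addr_gt0 //; lra.
Qed.

Let tilt_weight_tau1 : tilt_weight Lam (tau - 1) = Lam^-1.
Proof.
have Lam_gt0 : 0 < Lam by apply: lt_le_trans Lam_ge1.
rewrite /tilt_weight; field; rewrite gt_eqF ?addr_gt0 //; lra.
Qed.

Lemma tilt_weight_range s : tau - 1 <= s <= tau -> Lam^-1 <= tilt_weight Lam s <= Lam.
Proof.
case/andP=> lo_s s_hi; apply/andP; split.
  by rewrite -[X in X <= _]tilt_weight_tau1 lerD2l ler_wpM2l.
by rewrite -[X in _ <= X]tilt_weight_tau lerD2l ler_wpM2l.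
Qed.

Lemma tilt_weight_sgz u s : rho_lderiv tau u <= s <= rho_rderiv tau u ->
  u * tilt_weight Lam s = u * Lam ^ sgz u.
Proof.
rewrite /rho_lderiv /rho_rderiv; have [u_lt0|u_gt0|->] := ltgtP u 0; last by rewrite !mul0r.
- by rewrite -eq_le => /eqP <-; rewrite tilt_weight_tau1 ltr0_sgz // exprN1.
- by rewrite -eq_le => /eqP <-; rewrite tilt_weight_tau gtr0_sgz // expr1z.
Qed.

End TiltWeight.
End Odds.

Section Proposition6.
Variables (R : realType) (n d k : nat) (X : 'I_n -> 'rV[R]_d) (Y : 'I_n -> R).
Variables (Z : 'I_n -> bool) (ehat : 'rV[R]_d -> R) (g : 'rV[R]_d -> 'rV[R]_k).
Variables (Lam : R) (ghat : 'rV[R]_k).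
Hypotheses (Lam_ge1 : 1 <= Lam) (he : forall i, 0 < ehat (X i) < 1).

Local Notation eh i := (ehat (X i)).
Local Notation z i := ((Z i)%:R : R).
Local Notation res i := (Y i - dotk ghat (g (X i))).
Local Notation r i := ((1 - eh i) / eh i).
Local Notation tau := (Lam / (Lam + 1)).
Local Notation balanced e :=
  (forall j : 'I_k, Pn (fun i => g (X i) 0 j * z i / e i) = Pn (fun i => g (X i) 0 j * z i / eh i)).

Let Lam_gt0 : 0 < Lam. Proof. exact: lt_le_trans Lam_ge1. Qed.
Let eh_gt0 i : 0 < eh i. Proof. by case/andP: (he i). Qed.
Let eh_lt1 i : eh i < 1. Proof. by case/andP: (he i). Qed.
Let zr_ge0 i : 0 <= z i * r i.
Proof. by rewrite mulr_ge0 ?ler0n ?divr_ge0 ?subr_ge0 ?(ltW (eh_gt0 i)) ?(ltW (eh_lt1 i)). Qed.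

Lemma Pn_obj_split (e : 'I_n -> R) :
  Pn (fun i => Y i * z i / e i)
  = Pn (fun i => res i * z i / e i) + Pn (fun i => dotk ghat (g (X i)) * z i / e i).
Proof. by rewrite -PnD; apply: eq_Pn => i; ring. Qed.

Lemma Pn_balanced_dotk (e : 'I_n -> R) : balanced e ->
  Pn (fun i => dotk ghat (g (X i)) * z i / e i) = Pn (fun i => dotk ghat (g (X i)) * z i / eh i).
Proof.
move=> bal; under eq_Pn do rewrite -mulrA; under [RHS]eq_Pn do rewrite -mulrA.
rewrite !Pn_dotk; apply: eq_bigr => j _; congr (_ * _).
by under eq_Pn do rewrite mulrA; under [RHS]eq_Pn do rewrite mulrA; apply: bal.
Qed.

Lemma Pn_obj_feasible_le (e : 'I_n -> R) : En Lam (fun i => eh i) e -> balanced e ->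
  Pn (fun i => Y i * z i / e i)
  <= Pn (fun i => res i * z i * (1 + Lam ^ sgz (res i) * (1 - eh i) / eh i))
     + Pn (fun i => dotk ghat (g (X i)) * z i / eh i).
Proof.
move=> eEn bal; rewrite Pn_obj_split (Pn_balanced_dotk bal) lerD2r; apply: ler_Pn => i.
have q_range := eEn i; set q := odds (e i) / odds (eh i) in q_range.
have q_gt0 : 0 < q by case/andP: q_range => + _; apply: lt_le_trans; rewrite invr_gt0.
rewrite (inv_odds_ratio (he i) q_gt0) -[Lam ^ _ * _ / _]mulrA.
have scale c : res i * z i * (1 + c * r i) = res i * z i + z i * r i * (res i * c) by ring.
by rewrite !scale lerD2l ler_wpM2l // mulr_le_sgz // invr_sym_range.
Qed.

Lemma check_loss_subgradient :
  (forall gam : 'rV[R]_k,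
     Pn (fun i => rho tau (res i) * z i * (1 - eh i) / eh i)
     <= Pn (fun i => rho tau (Y i - dotk gam (g (X i))) * z i * (1 - eh i) / eh i)) ->
  exists s : 'I_n -> R, (forall i, rho_lderiv tau (res i) <= s i <= rho_rderiv tau (res i))
                        /\ \sum_i (s i * (z i * r i)) *: g (X i) = 0.
Proof.
move=> ghat_min; apply: check_loss_first_order => // gam.
have weightE (u : 'I_n -> R) :
    Pn (fun i => u i * z i * (1 - eh i) / eh i) = Pn (fun i => u i * (z i * r i)).
  by apply: eq_Pn => i; rewrite !mulrA.
by have := ghat_min gam; rewrite !weightE.
Qed.

Section Tilted.
Variable s : 'I_n -> R.
Hypothesis s_range : forall i, rho_lderiv tau (res i) <= s i <= rho_rderiv tau (res i).
Hypothesis s_sum0 : \sum_i (s i * (z i * r i)) *: g (X i) = 0.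

Local Notation e i := (odds_tilt (tilt_weight Lam (s i)) (eh i)).

Lemma tilt_En : En Lam (fun i => eh i) (fun i => e i).
Proof.
move=> i; have w_range := tilt_weight_range Lam_ge1 (rho_subgradient_range (s_range i)).
have w_gt0 : 0 < tilt_weight Lam (s i).
  by case/andP: w_range => + _; apply: lt_le_trans; rewrite invr_gt0.
by rewrite odds_ratio_tilt // invr_sym_range.
Qed.

Lemma tilt_balanced : balanced (fun i => e i).
Proof.
move=> j; have step i : g (X i) 0 j * z i / e i
    = g (X i) 0 j * z i / eh i + (Lam - Lam^-1) * (s i * (z i * r i) * g (X i) 0 j).
  have eh_neq0 : eh i != 0 by rewrite gt_eqF.
  by rewrite /odds_tilt invrK /tilt_weight; field; rewrite eh_neq0 gt_eqF.
have sum0 : \sum_i s i * (z i * r i) * g (X i) 0 j = 0.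
  have := congr1 (fun M : 'rV[R]_k => M 0 j) s_sum0; rewrite summxE mxE.
  by under eq_bigr do rewrite mxE.
by rewrite (eq_Pn step) PnD PnZ {2}/Pn sum0 mul0r mulr0 addr0.
Qed.

Lemma Pn_obj_tilt :
  Pn (fun i => Y i * z i / e i)
  = Pn (fun i => res i * z i * (1 + Lam ^ sgz (res i) * (1 - eh i) / eh i))
    + Pn (fun i => dotk ghat (g (X i)) * z i / eh i).
Proof.
rewrite Pn_obj_split (Pn_balanced_dotk tilt_balanced); congr (_ + _); apply: eq_Pn => i.
rewrite /odds_tilt invrK -[Lam ^ _ * _ / _]mulrA.
have scale c : res i * z i * (1 + c * r i) = res i * z i + z i * r i * (res i * c) by ring.
by rewrite !scale (tilt_weight_sgz Lam_ge1 (s_range i)).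
Qed.

End Tilted.
End Proposition6.

Theorem proposition6 (R : realType) (n d k : nat)
  (X : 'I_n -> 'rV[R]_d) (Y : 'I_n -> R) (Z : 'I_n -> bool)
  (ehat : 'rV[R]_d -> R) (g : 'rV[R]_d -> 'rV[R]_k) (Lam : R)
  (hLam : 1 <= Lam)
  (hint : exists (j : 'I_k) (c : R), c != 0 /\ forall x, g x 0 j = c)
  (he : forall i, 0 < ehat (X i) < 1)
  (ghat : 'rV[R]_k)
  (hmin : forall gam : 'rV[R]_k,
     Pn (fun i => rho (Lam / (Lam + 1)) (Y i - dotk ghat (g (X i))) * (Z i)%:R
                   * (1 - ehat (X i)) / ehat (X i))
     <= Pn (fun i => rho (Lam / (Lam + 1)) (Y i - dotk gam (g (X i))) * (Z i)%:R
                   * (1 - ehat (X i)) / ehat (X i))) :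
  let eh := fun i => ehat (X i) in
  let obj := fun ebar : 'I_n -> R =>
    Pn (fun i => Y i * (Z i)%:R / ebar i) / Pn (fun i => (Z i)%:R / eh i) in
  let feasible := fun ebar : 'I_n -> R =>
    En Lam eh ebar /\
    forall j : 'I_k, Pn (fun i => g (X i) 0 j * (Z i)%:R / ebar i)
                   = Pn (fun i => g (X i) 0 j * (Z i)%:R / eh i) in
  let value :=
    (Pn (fun i => (Y i - dotk ghat (g (X i))) * (Z i)%:R
          * (1 + Lam ^ (sgz (Y i - dotk ghat (g (X i)))) * (1 - eh i) / eh i))
     + Pn (fun i => dotk ghat (g (X i)) * (Z i)%:R / eh i))
    / Pn (fun i => (Z i)%:R / eh i) in
  (exists2 ebar, feasible ebar & obj ebar = value) /\
  (forall ebar, feasible ebar -> obj ebar <= value).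
Proof.
move=> eh obj feasible value.
have [s [s_range s_sum0]] := check_loss_subgradient he hmin.
have denom_ge0 : 0 <= (Pn (fun i => (Z i)%:R / eh i))^-1.
  by rewrite invr_ge0 Pn_ge0 // => i; rewrite divr_ge0 // ltW //; case/andP: (he i).
split.
  exists (fun i => odds_tilt (tilt_weight Lam (s i)) (eh i)).
    by split; [exact: tilt_En | exact: tilt_balanced].
  by rewrite /obj /value (Pn_obj_tilt hLam he s_range s_sum0).
by move=> e [eEn bal]; rewrite /obj /value ler_wpM2r // Pn_obj_feasible_le.
Qed.
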